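(* Let $R$ be a unital associative ring and $n\ge1$. Let $\Phi$ and $\Phi^{-1}$ be as defined below and let $\Psi=J_2\circ\Phi\circ J_2$. Then $\Psi$ and $\Phi^{-1}$ have the same domain, each maps this domain bijectively onto ${\rm dom}(\Phi)$, and $\Phi^{-1}(A)\sim\Psi(A)$ for every $A\in{\rm dom}(\Psi)={\rm dom}(\Phi^{-1})$.
   Context: $R^*$: units of $R$. $M_n^*(R)$: invertible $n\times n$ matrices; $M_n^\star(R)$: matrices with all entries in $R^*$. $J_1(M)=M^{-1}$ on $M_n^*(R)$; $J_2(M)_{jk}=(M_{kj})^{-1}$ on $M_n^\star(R)$; $J=J_2\circ J_1$, $J^{-1}=J_1\circ J_2$, where $g\circ f$ has domain $\{x\in{\rm dom}(f):f(x)\in{\rm dom}(g)\}$. $\widehat M_n(R)$: matrices whose first row and column consist of $1$'s. For $A=\{a_{j,k}\}\in M_n^\star(R)$: $\Lambda^L(A)_{j,k}=a_{1,1}a_{j,1}^{-1}a_{j,k}a_{1,k}^{-1}$, $\Lambda^R(A)_{j,k}=a_{j,1}^{-1}a_{j,k}a_{1,k}^{-1}a_{1,1}$. $\Phi(A)=J_2(\Lambda^L(A^{-1}))$ with ${\rm dom}(\Phi)={\rm dom}(J)\cap\widehat M_n(R)\cap M_n^\star(R)$; $\Phi^{-1}(A)=\Lambda^R(J^{-1}(A))$ with domain $\widehat M_n(R)\cap\{M\in{\rm dom}(J^{-1}):J^{-1}(M)\in M_n^\star(R)\}$ (this is the inverse map of $\Phi$). $A\sim B$ means $B=D_1^{-1}AD_2$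 for invertible diagonal $D_1,D_2$. *)

From HB Require Import structures.
From mathcomp Require Import all_boot all_order all_algebra.
From Stdlib Require Import ClassicalEpsilon.
Set Implicit Arguments. Unset Strict Implicit. Unset Printing Implicit Defensive.
Import GRing.Theory.
Local Open Scope ring_scope.

Section Defs.
Variables (R : unitRingType) (n : nat).
(* Square matrices of size n.+1 (i.e. any size >= 1); index ord0 is "1". *)
Notation M := 'M[R]_n.+1.

Definition is_inverse (A B : M) : Prop := A *m B = 1%:M /\ B *m A = 1%:M.

Definition invertible (A : M) : Prop := exists B, is_inverse A B.

Definition starb (A : M) : bool := [forall j, forall k, A j k \is a GRing.unit].

Definition hatb (A : M) : bool := [forall j, (A ord0 j == 1) && (A j ord0 == 1)].

(* Partial maps are option-valued; domain = where the value is Some. *)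
Definition J1 (A : M) : option M :=
  match excluded_middle_informative (invertible A) with
  | left H => Some (proj1_sig (constructive_indefinite_description _ H))
  | right _ => None
  end.

Definition J2 (A : M) : option M :=
  if starb A then Some (\matrix_(j, k) (A k j)^-1) else None.

Definition pcomp (g f : M -> option M) (A : M) : option M :=
  match f A with Some B => g B | None => None end.

Definition J := pcomp J2 J1.
Definition Jinv := pcomp J1 J2.

Definition LamL (A : M) : option M :=
  if starb A then
    Some (\matrix_(j, k) (A ord0 ord0 * (A j ord0)^-1 * A j k * (A ord0 k)^-1))
  else None.

Definition LamR (A : M) : option M :=
  if starb A then
    Some (\matrix_(j, k) ((A j ord0)^-1 * A j k * (A ord0 k)^-1 * A ord0 ord0))
  else None.

Definition Phi (A : M) : option M :=
  if hatb A && starb A then pcomp J2 (pcomp LamL J1) A else None.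

Definition Phiinv (A : M) : option M :=
  if hatb A then pcomp LamR Jinv A else None.

Definition Psi := pcomp J2 (pcomp Phi J2).

Definition dom (f : M -> option M) (A : M) : Prop := exists B, f A = Some B.

Definition bij_onto (f g : M -> option M) : Prop :=
  [/\ (forall A B, f A = Some B -> dom g B),
      (forall A1 A2 B, f A1 = Some B -> f A2 = Some B -> A1 = A2)
    & (forall B, dom g B -> exists A, f A = Some B)].

Definition is_diag (D : M) : Prop := forall i j, i != j -> D i j = 0.

Definition msim (A B : M) : Prop :=
  exists D1 D1' D2, [/\ is_diag D1, is_diag D2, is_inverse D1 D1',
                        invertible D2 & B = D1' *m A *m D2].
End Defs.

(** [Phi^-1] and [Psi] are both defined exactly at those [A] for which
    [C = J_2(A)^-1] exists and has unit entries, with [Phi^-1(A) = Lambda^R(C)]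
    and [Psi(A) = Lambda^L(C)].  Each normalisation rescales rows and columns
    by units, [Lambda(C) = D1 C D2], so [Lambda(C)^-1 = D2^-1 J_2(A) D1^-1]
    has unit entries and both values lie in dom(Phi).  A rescaling [D1 B D2]
    is seen by [Lambda^L] (resp. [Lambda^R]) only as the conjugation by the
    corner entry of [D1] (resp. [D2^-1]), and that entry is [1] for the
    rescalings produced by the other normalisation.  Hence [Lambda^R] applied
    to [Lambda^L(C)^-1], and [Lambda^L] applied to [Lambda^R(C)^-1], give back
    [J_2(A)]: this makes [Phi] a two-sided inverse of [Phi^-1] and yields the
    inverse of [Psi].  Finally [Lambda^L(C) = c Lambda^R(C) c^-1], [c = C_11]. *)

From Pilot Require Import Defs.
From mathcomp Require Import all_boot all_order all_algebra.
From Stdlib Require Import ClassicalEpsilon.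
Set Implicit Arguments. Unset Strict Implicit. Unset Printing Implicit Defensive.
Import GRing.Theory.
Local Open Scope ring_scope.

Section DiagonalScaling.
Variables (R : unitRingType) (n : nat).
Notation M := 'M[R]_n.+1.
Notation rV := 'rV[R]_n.+1.

Lemma is_inverse_sym (A B : M) : is_inverse A B -> is_inverse B A.
Proof. by case. Qed.

Lemma is_inverse_uniq (A B B' : M) :
  is_inverse A B -> is_inverse A B' -> B = B'.
Proof. by case=> _ BA [AB' _]; rewrite -[B]mulmx1 -AB' mulmxA BA mul1mx. Qed.

Lemma is_inverse_mul (A A' B B' : M) :
  is_inverse A A' -> is_inverse B B' -> is_inverse (A *m B) (B' *m A').
Proof.
case=> AA' A'A [BB' B'B]; split.
  by rewrite mulmxA -(mulmxA A) BB' mulmx1 AA'.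
by rewrite mulmxA -(mulmxA B') A'A mulmx1 B'B.
Qed.

Definition row_of_units (d : rV) : Prop := forall j, d 0 j \is a GRing.unit.

Definition invrow (d : rV) : rV := map_mx GRing.inv d.

Lemma row_of_units_inv (d : rV) : row_of_units d -> row_of_units (invrow d).
Proof. by move=> d_unit j; rewrite mxE unitrV. Qed.

Lemma is_inverse_diag (d : rV) :
  row_of_units d -> is_inverse (diag_mx d) (diag_mx (invrow d)).
Proof.
move=> d_unit; split; rewrite mulmx_diag -diag_const_mx; congr diag_mx;
  by apply/matrixP => i j; rewrite !mxE ?divrr ?mulVr.
Qed.

Definition dscale (d e : rV) (A : M) : M := diag_mx d *m A *m diag_mx e.

Lemma dscaleE d e (A : M) j k : dscale d e A j k = d 0 j * A j k * e 0 k.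
Proof. by rewrite /dscale mul_mx_diag mxE mul_diag_mx mxE. Qed.

Lemma is_inverse_dscale d e (A B : M) :
  row_of_units d -> row_of_units e -> is_inverse A B ->
  is_inverse (dscale d e A) (dscale (invrow e) (invrow d) B).
Proof.
move=> d_unit e_unit AB; rewrite /dscale -[_ *m B *m _]mulmxA.
apply: is_inverse_mul; last exact: is_inverse_diag.
by apply: is_inverse_mul => //; apply: is_inverse_diag.
Qed.

Lemma msim_dscale d e (A : M) :
  row_of_units d -> row_of_units e -> msim A (dscale d e A).
Proof.
move=> d_unit e_unit.
have diag_diag f : is_diag (diag_mx f : M).
  by move=> i j /negbTE ij; rewrite mxE ij mulr0n.
exists (diag_mx (invrow d)), (diag_mx d), (diag_mx e); split=> //.
- by apply/is_inverse_sym/is_inverse_diag.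
- by exists (diag_mx (invrow e)); apply: is_inverse_diag.
Qed.

Definition sconj (c : R) (A : M) : M := dscale (const_mx c) (const_mx c^-1) A.

Lemma sconj1 (A : M) : sconj 1 A = A.
Proof. by apply/matrixP => j k; rewrite dscaleE !mxE invr1 mul1r mulr1. Qed.

End DiagonalScaling.

Section Normalisations.
Variables (R : unitRingType) (n : nat).
Notation M := 'M[R]_n.+1.
Notation rV := 'rV[R]_n.+1.
Notation o := (@ord0 n).

Lemma starP (A : M) : reflect (forall j k, A j k \is a GRing.unit) (starb A).
Proof.
apply: (iffP forallP) => [A_unit j k | A_unit j]; last by apply/forallP.
by move/forallP: (A_unit j).
Qed.

Lemma hatP (A : M) : reflect (forall j, A o j = 1 /\ A j o = 1) (hatb A).
Proof.
apply: (iffP forallP) => [A_hat j | A_hat j].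
  by case/andP: (A_hat j) => /eqP -> /eqP ->.
by case: (A_hat j) => -> ->; rewrite !eqxx.
Qed.

Lemma starb_dscale d e (A : M) :
  row_of_units d -> row_of_units e -> starb A -> starb (dscale d e A).
Proof.
by move=> d_unit e_unit /starP A_unit; apply/starP => j k; rewrite dscaleE !unitrMr.
Qed.

Definition J2m (A : M) : M := \matrix_(j, k) (A k j)^-1.

Lemma J2mK : involutive J2m.
Proof. by move=> A; apply/matrixP => j k; rewrite !mxE invrK. Qed.

Lemma starb_J2m (A : M) : starb (J2m A) = starb A.
Proof.
apply/starP/starP => A_unit j k; last by rewrite mxE unitrV.
by have := A_unit k j; rewrite mxE unitrV.
Qed.

Lemma hatb_J2m (A : M) : hatb (J2m A) = hatb A.
Proof.
have hat_J2m B : hatb B -> hatb (J2m B).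
  move/hatP=> B_hat; apply/hatP => j.
  by rewrite !mxE; have [-> ->] := B_hat j; rewrite invr1.
by apply/idP/idP => [/hat_J2m | /hat_J2m //]; rewrite J2mK.
Qed.

Definition LamLm (A : M) : M :=
  \matrix_(j, k) (A o o * (A j o)^-1 * A j k * (A o k)^-1).

Definition LamRm (A : M) : M :=
  \matrix_(j, k) ((A j o)^-1 * A j k * (A o k)^-1 * A o o).

Definition LamL_row (A : M) : rV := \row_j (A o o * (A j o)^-1).
Definition LamL_col (A : M) : rV := \row_k (A o k)^-1.
Definition LamR_row (A : M) : rV := \row_j (A j o)^-1.
Definition LamR_col (A : M) : rV := \row_k ((A o k)^-1 * A o o).

Lemma LamLm_dscale (A : M) : LamLm A = dscale (LamL_row A) (LamL_col A) A.
Proof. by apply/matrixP => j k; rewrite dscaleE !mxE. Qed.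

Lemma LamRm_dscale (A : M) : LamRm A = dscale (LamR_row A) (LamR_col A) A.
Proof. by apply/matrixP => j k; rewrite dscaleE !mxE !mulrA. Qed.

Section StarMatrix.
Variables (A : M) (A_star : starb A).

Let A_unit := elimT (starP A) A_star.

Lemma row_of_units_LamL : row_of_units (LamL_row A) /\ row_of_units (LamL_col A).
Proof. by split=> j; rewrite mxE ?unitrMl ?unitrV ?A_unit. Qed.

Lemma row_of_units_LamR : row_of_units (LamR_row A) /\ row_of_units (LamR_col A).
Proof. by split=> j; rewrite mxE ?unitrMr ?unitrV ?A_unit. Qed.

Lemma LamL_row0 : LamL_row A 0 o = 1.
Proof. by rewrite mxE divrr. Qed.

Lemma LamR_col0 : LamR_col A 0 o = 1.
Proof. by rewrite mxE mulVr. Qed.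

Lemma starb_LamLm : starb (LamLm A).
Proof.
have [d_unit e_unit] := row_of_units_LamL.
by rewrite LamLm_dscale; apply: starb_dscale.
Qed.

Lemma hatb_LamLm : hatb (LamLm A).
Proof.
by apply/hatP => j; rewrite !mxE !(divrK, mulrK, divrr, mulVr, mul1r, A_unit).
Qed.

Lemma hatb_LamRm : hatb (LamRm A).
Proof.
by apply/hatP => j; rewrite !mxE !(divrK, mulrK, divrr, mulVr, mul1r, A_unit).
Qed.

Lemma LamLm_sconj_LamRm : LamLm A = sconj (A o o) (LamRm A).
Proof.
by apply/matrixP => j k; rewrite /sconj dscaleE !mxE !mulrA (mulrK (A_unit _ _)).
Qed.

Lemma LamLm_dscaleE d e :
  row_of_units d -> row_of_units e ->
  LamLm (dscale d e A) = sconj (d 0 o) (LamLm A).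
Proof.
move=> d_unit e_unit; apply/matrixP => j k; rewrite /sconj !(dscaleE, mxE).
rewrite !invrM ?(unitrMl, unitrMr, d_unit, e_unit, A_unit) // !mulrA.
by rewrite (mulrK (e_unit o)) (divrK (d_unit j)) (mulrK (e_unit k)).
Qed.

Lemma LamRm_dscaleE d e :
  row_of_units d -> row_of_units e ->
  LamRm (dscale d e A) = sconj (e 0 o)^-1 (LamRm A).
Proof.
move=> d_unit e_unit; apply/matrixP => j k; rewrite /sconj !(dscaleE, mxE) invrK.
rewrite !invrM ?(unitrMl, unitrMr, d_unit, e_unit, A_unit) // !mulrA.
by rewrite (divrK (d_unit j)) (mulrK (e_unit k)) (divrK (d_unit o)).
Qed.

End StarMatrix.

Lemma LamLm_hat (A : M) : hatb A -> LamLm A = A.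
Proof.
move/hatP=> A_hat; apply/matrixP => j k; rewrite mxE.
have [-> _] := A_hat o; have [_ ->] := A_hat j; have [-> _] := A_hat k.
by rewrite invr1 !mulr1 mul1r.
Qed.

Lemma LamRm_hat (A : M) : hatb A -> LamRm A = A.
Proof.
move/hatP=> A_hat; apply/matrixP => j k; rewrite mxE.
have [-> _] := A_hat o; have [_ ->] := A_hat j; have [-> _] := A_hat k.
by rewrite invr1 !mulr1 mul1r.
Qed.

End Normalisations.

Section PartialMaps.
Variables (R : unitRingType) (n : nat).
Notation M := 'M[R]_n.+1.

Definition phi_witness (X Y : M) : Prop :=
  [/\ hatb X, starb X, is_inverse X Y & starb Y].

Lemma phi_witness_dscale (X Y : M) d e :
  phi_witness X Y -> row_of_units d -> row_of_units e -> hatb (dscale d e Y) ->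
  phi_witness (dscale d e Y) (dscale (invrow e) (invrow d) X).
Proof.
case=> _ X_star XY Y_star d_unit e_unit Y_hat; split=> //.
- exact: starb_dscale.
- exact/is_inverse_dscale/is_inverse_sym.
- by apply: starb_dscale => //; apply: row_of_units_inv.
Qed.

Definition invLamLm (X Y : M) : M :=
  dscale (invrow (LamL_col Y)) (invrow (LamL_row Y)) X.

Definition invLamRm (X Y : M) : M :=
  dscale (invrow (LamR_col Y)) (invrow (LamR_row Y)) X.

Lemma phi_witness_LamLm (X Y : M) :
  phi_witness X Y -> phi_witness (LamLm Y) (invLamLm X Y).
Proof.
move=> wY; have [_ _ _ Y_star] := wY; have [d_unit e_unit] := row_of_units_LamL Y_star.
rewrite LamLm_dscale; apply: phi_witness_dscale => //.
by rewrite -LamLm_dscale hatb_LamLm.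
Qed.

Lemma phi_witness_LamRm (X Y : M) :
  phi_witness X Y -> phi_witness (LamRm Y) (invLamRm X Y).
Proof.
move=> wY; have [_ _ _ Y_star] := wY; have [d_unit e_unit] := row_of_units_LamR Y_star.
rewrite LamRm_dscale; apply: phi_witness_dscale => //.
by rewrite -LamRm_dscale hatb_LamRm.
Qed.

Lemma LamRm_coLamL (X Y : M) : phi_witness X Y -> LamRm (invLamLm X Y) = X.
Proof.
case=> X_hat X_star _ Y_star; have [d_unit e_unit] := row_of_units_LamL Y_star.
rewrite LamRm_dscaleE //; try exact: row_of_units_inv.
by rewrite mxE invrK LamL_row0 // sconj1 LamRm_hat.
Qed.

Lemma LamLm_coLamR (X Y : M) : phi_witness X Y -> LamLm (invLamRm X Y) = X.
Proof.
case=> X_hat X_star _ Y_star; have [d_unit e_unit] := row_of_units_LamR Y_star.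
rewrite LamLm_dscaleE //; try exact: row_of_units_inv.
by rewrite mxE LamR_col0 // invr1 sconj1 LamLm_hat.
Qed.

Lemma J2E (A : M) : J2 A = if starb A then Some (J2m A) else None.
Proof. by []. Qed.

Lemma LamLE (A : M) : LamL A = if starb A then Some (LamLm A) else None.
Proof. by []. Qed.

Lemma LamRE (A : M) : LamR A = if starb A then Some (LamRm A) else None.
Proof. by []. Qed.

Lemma J1_Some (A B : M) : J1 A = Some B <-> is_inverse A B.
Proof.
rewrite /J1; case: excluded_middle_informative => [A_inv | A_not_inv]; last first.
  by split=> // AB; case: A_not_inv; exists B.
have AC := proj2_sig (constructive_indefinite_description _ A_inv).
by split=> [[<-] // | AB]; rewrite (is_inverse_uniq AC AB).
Qed.

Lemma PhiP (X Z : M) :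
  Phi X = Some Z <-> exists2 Y, phi_witness X Y & Z = J2m (LamLm Y).
Proof.
rewrite /Phi /Defs.pcomp; split.
  case: (boolP (hatb X)) => // X_hat; case: (boolP (starb X)) => //= X_star.
  case XY: (J1 X) => [Y|] //; rewrite LamLE; case: (boolP (starb Y)) => // Y_star.
  rewrite J2E starb_LamLm // => -[<-].
  by exists Y => //; split => //; apply/J1_Some.
case=> Y [X_hat X_star /J1_Some XY Y_star] ->.
by rewrite X_hat X_star XY LamLE Y_star J2E starb_LamLm.
Qed.

Lemma PhiinvP (A Q : M) :
  Phiinv A = Some Q <-> exists2 C, phi_witness (J2m A) C & Q = LamRm C.
Proof.
rewrite /Phiinv /Jinv /Defs.pcomp J2E; split.
  case: (boolP (hatb A)) => // A_hat; case: (boolP (starb A)) => // A_star.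
  case AC: (J1 (J2m A)) => [C|] //; rewrite LamRE; case: (boolP (starb C)) => // C_star.
  move=> -[<-]; exists C => //.
  by split; rewrite ?hatb_J2m ?starb_J2m //; apply/J1_Some.
case=> C []; rewrite hatb_J2m starb_J2m => A_hat A_star /J1_Some AC C_star ->.
by rewrite A_hat A_star AC LamRE C_star.
Qed.

Lemma PsiP (A P : M) :
  Psi A = Some P <-> exists2 C, phi_witness (J2m A) C & P = LamLm C.
Proof.
rewrite /Psi /Defs.pcomp J2E; split.
  case: (boolP (starb A)) => // A_star; case AZ: (Phi (J2m A)) => [Z|] //.
  have [C wC ->] := proj1 (PhiP _ _) AZ; have [_ _ _ C_star] := wC.
  rewrite J2E starb_J2m starb_LamLm // J2mK => -[<-].
  by exists C.
case=> C wC ->; have [_ ] := wC; rewrite starb_J2m => A_star _ C_star.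
rewrite A_star /=.
have -> : Phi (J2m A) = Some (J2m (LamLm C)) by apply/PhiP; exists C.
by rewrite J2E starb_J2m starb_LamLm // J2mK.
Qed.

End PartialMaps.

Section Proposition4.
Variables (R : unitRingType) (n : nat).
Notation M := 'M[R]_n.+1.

Lemma bij_onto_partial_inverse (f g : M -> option M) :
  (forall A B, f A = Some B -> g B = Some A) ->
  (forall B C, g B = Some C -> f C = Some B) -> bij_onto f g.
Proof.
move=> gf fg; split.
- by move=> A B /gf gB; exists A.
- by move=> A1 A2 B /gf gB /gf; rewrite gB => -[].
- by move=> B [C /fg fC]; exists C.
Qed.

Lemma Phi_Phiinv (A Q : M) : Phiinv A = Some Q -> Phi Q = Some A.
Proof.
case/PhiinvP => C wC ->; apply/PhiP; exists (invLamRm (J2m A) C).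
  exact: phi_witness_LamRm.
by rewrite LamLm_coLamR // J2mK.
Qed.

Lemma Phiinv_Phi (X Z : M) : Phi X = Some Z -> Phiinv Z = Some X.
Proof.
case/PhiP => Y wY ->; apply/PhiinvP; exists (invLamLm X Y).
  by rewrite J2mK; apply: phi_witness_LamLm.
by rewrite LamRm_coLamL.
Qed.

Lemma dom_Psi_Phiinv (A : M) : dom (@Psi R n) A <-> dom (@Phiinv R n) A.
Proof.
split=> -[B].
  by case/PsiP => C wC _; exists (LamRm C); apply/PhiinvP; exists C.
by case/PhiinvP => C wC _; exists (LamLm C); apply/PsiP; exists C.
Qed.

Lemma Psi_dom_Phi (A P : M) : Psi A = Some P -> dom (@Phi R n) P.
Proof.
case/PsiP => C wC ->; exists (J2m (LamLm (invLamLm (J2m A) C))).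
by apply/PhiP; exists (invLamLm (J2m A) C) => //; apply: phi_witness_LamLm.
Qed.

Lemma Psi_onto (X : M) : dom (@Phi R n) X -> exists A, Psi A = Some X.
Proof.
case=> Z /PhiP [Y wY _]; exists (J2m (LamRm Y)); apply/PsiP.
exists (invLamRm X Y); first by rewrite J2mK; apply: phi_witness_LamRm.
by rewrite LamLm_coLamR.
Qed.

Lemma Psi_inverse_LamRm (A P : M) :
  Psi A = Some P -> exists2 W, is_inverse P W & LamRm W = J2m A.
Proof.
case/PsiP => C wC ->; exists (invLamLm (J2m A) C); last exact: LamRm_coLamL.
by case: (phi_witness_LamLm wC).
Qed.

Lemma Psi_inj (A1 A2 P : M) : Psi A1 = Some P -> Psi A2 = Some P -> A1 = A2.
Proof.
case/Psi_inverse_LamRm => W1 PW1 W1A1 /Psi_inverse_LamRm [W2 PW2 W2A2].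
by apply: (inv_inj (@J2mK R n)); rewrite -W1A1 -W2A2 (is_inverse_uniq PW1 PW2).
Qed.

Lemma msim_Phiinv_Psi (A P Q : M) :
  Phiinv A = Some Q -> Psi A = Some P -> msim Q P.
Proof.
case/PhiinvP => C1 [_ _ AC1 C1_star] -> /PsiP [C2 [_ _ AC2 _] ->].
rewrite -(is_inverse_uniq AC1 AC2) LamLm_sconj_LamRm //.
by apply: msim_dscale => j; rewrite mxE ?unitrV; apply: (elimT (starP _) C1_star).
Qed.

End Proposition4.

Theorem proposition4 (R : unitRingType) (n : nat) :
  (forall A : 'M[R]_n.+1, dom (@Psi R n) A <-> dom (@Phiinv R n) A) /\
  bij_onto (@Psi R n) (@Phi R n) /\
  bij_onto (@Phiinv R n) (@Phi R n) /\
  (forall (A P Q : 'M[R]_n.+1),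
      Phiinv A = Some Q -> Psi A = Some P -> msim Q P).
Proof.
split; first exact: dom_Psi_Phiinv.
split; first by split; [exact: Psi_dom_Phi | exact: Psi_inj | exact: Psi_onto].
split; last exact: msim_Phiinv_Psi.
by apply: bij_onto_partial_inverse => [A Q /Phi_Phiinv | X Z /Phiinv_Phi].
Qed.
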